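(* Let $C$ be a clause and $\Gamma$ a set of clauses with designated blocking variables. Suppose there is a permutation $\pi$ of the variables (viewed as a substitution) such that (1) $\pi$ maps the set of blocking variables to itself, (2) the substitution $\lnot C\circ\pi$ satisfies $C$, and (3) $\Gamma{\upharpoonright}_{\lnot C}\supseteq\Gamma{\upharpoonright}_{\lnot C\circ\pi}$. Then $C$ is cost-SR w.r.t. $\Gamma$.
   Context: Substitutions map variables to $0$, $1$ or literals ($\sigma(\lnot x)=\lnot\sigma(x)$, $\sigma(0)=0$, $\sigma(1)=1$); $(\sigma\circ\tau)(x)=\sigma(\tau(x))$; total assignments assign all variables. $C{\upharpoonright}_\sigma$: apply $\sigma$ to the literals and simplify; $\sigma$ satisfies $C$ if the result is $1$ or tautological; $\Gamma{\upharpoonright}_\sigma$ is the multiset of $C{\upharpoonright}_\sigma\ne1$, $C\in\Gamma$. $\lnot C$ is the partial assignment falsifying all literals of $C$. $\Gamma\vdash_1 D$ means unit propagation on $\Gamma{\upharpoonright}_{\lnot D}$ derives the empty clause; $\Gamma\vdash_1\Delta$ means this for all $D\in\Delta$. $\mathrm{cost}(\alpha)=\sum_i\alpha(b_i)$ over blocking variables. $C$ is cost-SR w.r.t. $\Gamma$ if there is a substitution $\sigma$ with (1) $\Gamma{\upharpoonright}_{\lnot C}\vdash_1(\Gamma\cup\{C\}){\upharpoonright}_\sigma$ and (2) $\mathrm{cost}(\tau\circ\sigma)\le\mathrm{cost}(\tau)$ for all total $\tau\supseteq\lnot C$. *)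

From HB Require Import structures.
From mathcomp Require Import all_boot all_fingroup.
Set Implicit Arguments. Unset Strict Implicit. Unset Printing Implicit Defensive.

Section CostSR.
Variable V : finType.

(* A literal is a pair (v, b): b = true is the positive literal v, b = false is ~v. *)
Definition lit := (V * bool)%type.
Definition lneg (l : lit) : lit := (l.1, ~~ l.2).

Definition clause := {set lit}.

Inductive term := TConst of bool | TLit of lit.
Definition subst := V -> term.

Definition tneg (t : term) : term :=
  match t with TConst b => TConst (~~ b) | TLit l => TLit (lneg l) end.

Definition subst_lit (s : subst) (l : lit) : term :=
  if l.2 then s l.1 else tneg (s l.1).

Definition subst_term (s : subst) (t : term) : term :=
  match t with TConst b => TConst b | TLit l => subst_lit s l end.

Definition subst_comp (s t : subst) : subst := fun x => subst_term s (t x).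

Definition perm_sub (p : {perm V}) : subst := fun v => TLit (p v, true).

Definition is_true_term (t : term) : bool :=
  if t is TConst true then true else false.
Definition term_is_lit (t : term) (l : lit) : bool :=
  if t is TLit l' then l' == l else false.

(* C|_sigma : None stands for the constant 1 (satisfied clause);
   otherwise the clause of the literals not mapped to 0. *)
Definition restrict_clause (s : subst) (C : clause) : option clause :=
  if [exists l in C, is_true_term (subst_lit s l)] then None
  else Some [set l | [exists l0 in C, term_is_lit (subst_lit s l0) l]].

Definition tautological (C : clause) : bool :=
  [exists l, (l \in C) && (lneg l \in C)].

Definition satisfies (s : subst) (C : clause) : bool :=
  match restrict_clause s C with None => true | Some D => tautological D end.

(* Gamma|_sigma : the multiset (list) of the C|_sigma <> 1, C in Gamma *)
Definition restrict (s : subst) (G : seq clause) : seq clause :=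
  pmap (restrict_clause s) G.

(* ~C : the partial assignment falsifying all literals of C
   (well defined for non-tautological C); unassigned variables are fixed. *)
Definition negC (C : clause) : subst := fun v =>
  if (v, true) \in C then TConst false
  else if (v, false) \in C then TConst true
  else TLit (v, true).

Definition unit_sub (l : lit) : subst := fun v =>
  if v == l.1 then TConst l.2 else TLit (v, true).

Inductive up_refutes : seq clause -> Prop :=
| UPEmpty F : set0 \in F -> up_refutes F
| UPUnit F l : [set l] \in F -> up_refutes (restrict (unit_sub l) F) -> up_refutes F.

Definition up_derives (G : seq clause) (D : clause) : Prop :=
  up_refutes (restrict (negC D) G).

Definition up_derives_all (G Delta : seq clause) : Prop :=
  forall D, D \in Delta -> up_derives G D.

Definition total (s : subst) : Prop := forall v, exists b, s v = TConst b.

Definition extends (tau alpha : subst) : Prop :=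
  forall v b, alpha v = TConst b -> tau v = TConst b.

Definition cost (B : {set V}) (a : subst) : nat :=
  \sum_(b in B) (if a b is TConst true then 1 else 0).

Definition cost_SR (B : {set V}) (G : seq clause) (C : clause) : Prop :=
  exists s : subst,
    up_derives_all (restrict (negC C) G) (restrict s (C :: G)) /\
    (forall tau, total tau -> extends tau (negC C) ->
       cost B (subst_comp tau s) <= cost B tau).

End CostSR.

From mathcomp Require Import all_boot all_fingroup.
Set Implicit Arguments. Unset Strict Implicit. Unset Printing Implicit Defensive.

(* The witness is sigma := ~C o pi.  Both ~C and sigma send every variable
   either to a constant or to a positive literal, and they do so injectively,
   so restricting a non-tautological clause by them never creates a
   tautology.  Hence sigma satisfying C means C|sigma = 1, and every clause of
   (C :: Gamma)|sigma lies in Gamma|~C by (3); a non-tautological clause D of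
   Gamma|~C is refuted at once, since D|~D is the empty clause.  For the cost,
   a total tau extending ~C gives (tau o sigma)(b) = tau(pi b), and summing
   over B is invariant under pi by (1). *)

Section CostSRPermutation.
Variable V : finType.

Definition rename_lit (f : V -> V) (l : lit V) : lit V := (f l.1, l.2).

Definition renaming_subst (f : V -> V) (s : subst V) : Prop :=
  forall v l, s v = TLit l -> l = (f v, true).

Lemma negC_renaming (C : clause V) : renaming_subst id (negC C).
Proof. by move=> v l; rewrite /negC; case: ifP => // _; case: ifP => // _ [<-]. Qed.

Lemma negC_perm_renaming (C : clause V) (p : {perm V}) :
  renaming_subst p (subst_comp (negC C) (perm_sub p)).
Proof. by move=> v l /negC_renaming. Qed.

Lemma subst_lit_renaming f s (l0 l : lit V) :
  renaming_subst f s -> subst_lit s l0 = TLit l -> l = rename_lit f l0.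
Proof.
move=> sf; case: l0 => v [|]; rewrite /subst_lit /rename_lit /=.
  exact: sf.
by case E: (s v) => [//|l'] [<-]; rewrite (sf _ _ E).
Qed.

Lemma restrict_clause_renaming f s (C D : clause V) :
  renaming_subst f s -> restrict_clause s C = Some D ->
  D \subset rename_lit f @: C.
Proof.
rewrite /restrict_clause => sf; case: ifP => // _ [<-].
apply/subsetP => l; rewrite inE => /existsP [l0 /andP [l0C]].
case E: (subst_lit s l0) => [//|l'] /eqP l'l.
by rewrite -l'l (subst_lit_renaming sf E) imset_f.
Qed.

Lemma tautologicalS (C D : clause V) :
  D \subset C -> tautological D -> tautological C.
Proof.
move=> /subsetP DC /existsP [l /andP [lD nlD]].
by apply/existsP; exists l; rewrite !DC.
Qed.

Lemma tautological_rename f (C : clause V) :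
  injective f -> tautological (rename_lit f @: C) -> tautological C.
Proof.
move=> f_inj /existsP [l /andP [/imsetP [[v b] vC ->]]].
case/imsetP=> [[w c] wC [/f_inj vw bc]].
by apply/existsP; exists (v, b); rewrite vC /lneg /= vw bc.
Qed.

Lemma satisfies_renaming f s (C : clause V) :
  injective f -> renaming_subst f s -> ~~ tautological C ->
  satisfies s C -> restrict_clause s C = None.
Proof.
move=> f_inj sf ntC; rewrite /satisfies.
case E: (restrict_clause s C) => [D|] // tD.
case/negP: ntC; apply: tautological_rename f_inj _.
exact: tautologicalS (restrict_clause_renaming sf E) tD.
Qed.

Lemma mem_restrict s (G : seq (clause V)) D :
  D \in restrict s G -> exists2 D0, D0 \in G & restrict_clause s D0 = Some D.
Proof. by rewrite mem_pmap => /mapP [D0 D0G ->]; exists D0. Qed.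

Lemma restrict_negC_ntaut (C : clause V) G D :
  (forall D0, D0 \in G -> ~~ tautological D0) ->
  D \in restrict (negC C) G -> ~~ tautological D.
Proof.
move=> ntG /mem_restrict [D0 /ntG ntD0 /(restrict_clause_renaming (@negC_renaming C))].
have -> : rename_lit id @: D0 = D0 by rewrite -[RHS]imset_id; apply: eq_imset => -[].
by move=> /tautologicalS tDD0; apply: contra ntD0.
Qed.

Lemma restrict_negC_self (D : clause V) :
  ~~ tautological D -> restrict_clause (negC D) D = Some set0.
Proof.
move=> ntD.
have falsified l : l \in D -> subst_lit (negC D) l = TConst V false.
  case: l => v [] lD; rewrite /subst_lit /negC /= lD //.
  by case: ifP => // vD; case/negP: ntD; apply/existsP; exists (v, true); rewrite vD.
rewrite /restrict_clause; case: existsP => [[l /andP [/falsified ->]] //|_].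
congr Some; apply/setP => l; rewrite !inE.
by apply/existsP => -[l0 /andP [/falsified ->]].
Qed.

Lemma up_derives_mem G (D : clause V) :
  D \in G -> ~~ tautological D -> up_derives G D.
Proof.
move=> DG ntD; apply: UPEmpty.
by rewrite mem_pmap -(restrict_negC_self ntD) map_f.
Qed.

Lemma subst_comp_negC (C : clause V) tau v :
  extends tau (negC C) -> subst_comp tau (negC C) v = tau v.
Proof.
move=> ext; rewrite /subst_comp.
case E: (negC C v) => [b|l] /=; first by rewrite (ext _ _ E).
by rewrite (negC_renaming E).
Qed.

Lemma cost_perm (B : {set V}) (p : {perm V}) a :
  cost (p @: B) a = cost B (fun v => a (p v)).
Proof. by rewrite /cost big_imset //= => x y _ _ /perm_inj. Qed.

End CostSRPermutation.

Theorem lemma6p5 (V : finType) (B : {set V}) (G : seq (clause V)) (C : clause V)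
    (p : {perm V}) :
  ~~ tautological C ->
  (forall D, D \in G -> ~~ tautological D) ->
  [set p b | b in B] = B ->
  satisfies (subst_comp (negC C) (perm_sub p)) C ->
  {subset restrict (subst_comp (negC C) (perm_sub p)) G <= restrict (negC C) G} ->
  cost_SR B G C.
Proof.
move=> ntC ntG pB sat sub.
exists (subst_comp (negC C) (perm_sub p)); split.
- have C1 := satisfies_renaming (@perm_inj _ p) (@negC_perm_renaming _ C p) ntC sat.
  rewrite /restrict /= C1 => D /sub DG.
  exact: up_derives_mem DG (restrict_negC_ntaut ntG DG).
- move=> tau _ ext; rewrite -{2}pB cost_perm.
  by apply/eq_leq/eq_bigr => b _; rewrite -(subst_comp_negC (p b) ext).
Qed.
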